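(* In the setting below, for any integers $1\le i_1<\cdots<i_k\le n$ (with $1\le k\le n$), $$\mathrm{grp}(S\cap F_{i_1}\cap\cdots\cap F_{i_k}\cap F_\sigma)=\mathrm{grp}(S)\cap H_{i_1}\cap\cdots\cap H_{i_k}\cap H_\sigma.$$
   Context: Let $K$ be a field, $n\ge1$, $\lambda=(\lambda_1,\ldots,\lambda_n)$ positive integers, $L=\mathrm{lcm}(\lambda_1,\ldots,\lambda_n)$, $\omega_i=L/\lambda_i$, $\omega=(\omega_1,\ldots,\omega_n)$. Let $S\subseteq\mathbb{N}^{n+1}$ be the semigroup generated by $(\mathbf{e}_i,0)$ ($i=1,\ldots,n$) and $(\beta,1)$ for all $\beta\in\mathbb{N}^n$ with $\omega\cdot\beta\ge L$ (this is the semigroup with $K[S]\cong R[It]$, the Rees algebra of the integral closure $I$ of $(x_1^{\lambda_1},\ldots,x_n^{\lambda_n})$ in $R=K[x_1,\ldots,x_n]$); $\mathrm{grp}(S)=\mathbb{Z}^{n+1}$. $\mathrm{pos}(S)$ is the cone of nonnegative real combinations of elements of $S$. $H_i$ is the $i$-th coordinate hyperplane of $\mathbb{R}^{n+1}$, $F_i=\mathrm{pos}(S)\cap H_i$, $H_\sigma=\{\sigma=0\}$ with $\sigma(\alpha,a_{n+1})=\omega\cdot\alpha-La_{n+1}$, and $F_\sigma=\mathrm{pos}(S)\cap H_\sigma$. *)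

From HB Require Import structures.
From mathcomp Require Import all_boot all_order all_algebra.
Unset Printing Implicit Defensive.
Import Order.TTheory GRing.Theory Num.Theory.
Local Open Scope ring_scope.

(* Vectors of Z^{n+1} (resp. R^{n+1}) are row vectors 'rV_(n.+1).
   Coordinates 1..n of the paper are indices 0..n-1 (via widen_ord),
   coordinate n+1 of the paper is ord_max. *)

Definition cx {n : nat} (i : 'I_n) : 'I_n.+1 := widen_ord (leqnSn n) i.

Definition Lcm {n : nat} (lam : 'I_n -> nat) : nat := (\big[lcmn/1%N]_(i < n) lam i)%N.
Definition omega {n : nat} (lam : 'I_n -> nat) (i : 'I_n) : nat := (Lcm lam %/ lam i)%N.

Definition sigma {R : nzRingType} {n : nat} (lam : 'I_n -> nat) (x : 'rV[R]_(n.+1)) : R :=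
  \sum_(i < n) (omega lam i)%:R * x 0 (cx i) - (Lcm lam)%:R * x 0 ord_max.

Definition gen {n : nat} (lam : 'I_n -> nat) (v : 'rV[int]_(n.+1)) : Prop :=
  (exists i : 'I_n, v = delta_mx 0 (cx i))
  \/ ((forall j : 'I_n, 0 <= v 0 (cx j)) /\ v 0 ord_max = 1 /\
      ((Lcm lam)%:R <= \sum_(i < n) (omega lam i)%:R * v 0 (cx i) :> int)).

Definition S {n : nat} (lam : 'I_n -> nat) (v : 'rV[int]_(n.+1)) : Prop :=
  exists s : seq 'rV[int]_(n.+1), (forall g, g \in s -> gen lam g) /\ v = \sum_(g <- s) g.

Definition grp {n : nat} (A : 'rV[int]_(n.+1) -> Prop) (v : 'rV[int]_(n.+1)) : Prop :=
  exists s : seq (int * 'rV[int]_(n.+1)),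
    (forall p, p \in s -> A p.2) /\ v = \sum_(p <- s) (p.2 *~ p.1).

Definition embR (R : realFieldType) {n : nat} (v : 'rV[int]_(n.+1)) : 'rV[R]_(n.+1) :=
  map_mx (fun z : int => z%:~R) v.

Definition pos (R : realFieldType) {n : nat} (lam : 'I_n -> nat) (x : 'rV[R]_(n.+1)) : Prop :=
  exists s : seq (R * 'rV[int]_(n.+1)),
    (forall p, p \in s -> 0 <= p.1 /\ S lam p.2) /\
    x = \sum_(p <- s) (p.1 *: embR R p.2).

Definition H {R : nzRingType} {n : nat} (j : 'I_n.+1) (x : 'rV[R]_(n.+1)) : Prop := x 0 j = 0.
Definition Hsigma {R : nzRingType} {n : nat} (lam : 'I_n -> nat) (x : 'rV[R]_(n.+1)) : Prop :=
  sigma lam x = 0.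

Definition F (R : realFieldType) {n : nat} (lam : 'I_n -> nat) (j : 'I_n.+1)
  (x : 'rV[R]_(n.+1)) : Prop := pos R lam x /\ @H R n j x.
Definition Fsigma (R : realFieldType) {n : nat} (lam : 'I_n -> nat)
  (x : 'rV[R]_(n.+1)) : Prop := pos R lam x /\ Hsigma lam x.

From HB Require Import structures.
From mathcomp Require Import all_boot all_order all_algebra zify.
Import Order.TTheory GRing.Theory Num.Theory.
Local Open Scope ring_scope.
Set Implicit Arguments. Unset Strict Implicit.

(* "⊆": the coordinate functions and σ are additive and vanish on the points
   of S lying on the faces, hence on the group those points generate.

   "⊇": let v vanish on the coordinates in I and on σ; let T be the
   complement of I.  Every degree-one vector (β, 1) with ω·β = L and β
   vanishing on I is such a face point; in particular so are the apexes
   a_j = (λ_j e_j, 1) and the mixed vectors b_jk for j, k ∈ T.  Subtracting a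
   multiple of some a_j clears the last coordinate of v (if T is empty,
   σ(v) = 0 forces v = 0).  What remains is a degree-0 vector supported on T
   with ω·v = 0, and it is written as a combination of the Koszul relations
   a_j - b_jk = c_jk e_j - c_kj e_k, where c_jk = λ_j / gcd(λ_j, λ_k), clearing
   the coordinates of T one at a time.  Clearing coordinate k only requires
   that v_k be a multiple of gcd_{j∈T'} c_kj (T' the rest of T), a divisibility
   consequence of ω·v = 0. *)

Section GeneratedGroup.
Variables (n : nat) (A : 'rV[int]_(n.+1) -> Prop).

Lemma grp0 : grp A 0.
Proof. by exists [::]; split => //; rewrite big_nil. Qed.

Lemma grp_gen u : A u -> grp A u.
Proof.
move=> Au; exists [:: (1, u)]; split; first by move=> p; rewrite inE => /eqP ->.
by rewrite big_seq1.
Qed.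

Lemma grpD u w : grp A u -> grp A w -> grp A (u + w).
Proof.
move=> [s [hs ->]] [t [ht ->]]; exists (s ++ t); split; last by rewrite big_cat.
by move=> p; rewrite mem_cat => /orP [/hs|/ht].
Qed.

Lemma grpMz u (z : int) : grp A u -> grp A (u *~ z).
Proof.
move=> [s [hs ->]]; exists [seq (p.1 * z, p.2) | p <- s]; split.
  by move=> p /mapP [q /hs hq ->].
by rewrite big_map mulrz_suml; apply: eq_bigr => p _; rewrite mulrzA.
Qed.

Lemma grpB u w : grp A u -> grp A w -> grp A (u - w).
Proof. by move=> hu hw; rewrite -mulrN1z; apply/grpD/grpMz. Qed.

Lemma grp_sub (B : 'rV[int]_(n.+1) -> Prop) v :
  (forall w, A w -> B w) -> grp A v -> grp B v.
Proof. by move=> AB [s [hs ->]]; exists s; split=> // p /hs /AB. Qed.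

Lemma grp_kernel (f : 'rV[int]_(n.+1) -> int) v :
  zmod_morphism f -> (forall w, A w -> f w = 0) -> grp A v -> f v = 0.
Proof.
move=> fB fA [s [hs ->]].
pose phi : {additive 'rV[int]_(n.+1) -> int} := HB.pack f (GRing.isZmodMorphism.Build _ _ f fB).
rewrite -[f]/(phi : _ -> _) raddf_sum big_seq big1 // => p /hs /fA h.
by rewrite raddfMz /= h mul0rz.
Qed.

End GeneratedGroup.

Section Weights.
Variables (n : nat) (lam : 'I_n -> nat).

Lemma lam_dvd_Lcm i : (lam i %| Lcm lam)%N.
Proof. by rewrite /Lcm (biglcmn_sup i). Qed.

Lemma omega_lam i : (omega lam i * lam i)%N = Lcm lam.
Proof. by rewrite /omega divnK // lam_dvd_Lcm. Qed.

Lemma omega_div i d : (d %| lam i)%N -> (omega lam i * (lam i %/ d))%N = (Lcm lam %/ d)%N.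
Proof. by move=> h; rewrite muln_divA // omega_lam. Qed.

Hypothesis lam_gt0 : forall i, (0 < lam i)%N.

Lemma Lcm_gt0 : (0 < Lcm lam)%N.
Proof. by rewrite /Lcm; elim/big_ind: _ => // x y hx hy; rewrite lcmn_gt0 hx hy. Qed.

Lemma omega_gt0 i : (0 < omega lam i)%N.
Proof. by have := Lcm_gt0; rewrite -(omega_lam i) muln_gt0 => /andP []. Qed.

End Weights.

Lemma sigma_is_zmod_morphism (R : nzRingType) n (lam : 'I_n -> nat) :
  zmod_morphism (@sigma R n lam).
Proof.
move=> x y; rewrite /sigma.
under eq_bigr => i _ do rewrite !mxE mulrBr.
rewrite sumrB !mxE mulrBr !opprB addrACA [RHS]addrACA; congr (_ + _); exact: addrC.
Qed.

HB.instance Definition _ (R : nzRingType) n (lam : 'I_n -> nat) :=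
  GRing.isZmodMorphism.Build _ _ (@sigma R n lam) (sigma_is_zmod_morphism lam).

Lemma sigmaB (R : nzRingType) n (lam : 'I_n -> nat) (x y : 'rV[R]_(n.+1)) :
  sigma lam (x - y) = sigma lam x - sigma lam y.
Proof. exact: raddfB. Qed.

Lemma sigmaMz (R : nzRingType) n (lam : 'I_n -> nat) (x : 'rV[R]_(n.+1)) (z : int) :
  sigma lam (x *~ z) = sigma lam x *~ z.
Proof. exact: raddfMz. Qed.

Lemma sigma_embR (R : realFieldType) n (lam : 'I_n -> nat) (w : 'rV[int]_(n.+1)) :
  sigma lam (embR R w) = (sigma lam w)%:~R.
Proof.
rewrite /sigma rmorphB rmorph_sum /= !mxE rmorphM rmorph_nat; congr (_ - _).
by apply: eq_bigr => i _; rewrite !mxE rmorphM rmorph_nat.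
Qed.

Lemma coordB n (u w : 'rV[int]_(n.+1)) i : (u - w) 0 i = u 0 i - w 0 i.
Proof. by rewrite !mxE. Qed.

Lemma coord_is_zmod_morphism n (j : 'I_n.+1) :
  zmod_morphism (fun x : 'rV[int]_(n.+1) => x 0 j).
Proof. by move=> x y; exact: coordB. Qed.

Lemma coordMz n (u : 'rV[int]_(n.+1)) (z : int) i : (u *~ z) 0 i = u 0 i * z.
Proof. by rewrite -scaler_int mxE intz mulrC. Qed.

Lemma lift_max n (j : 'I_n) : lift ord_max j = cx j.
Proof. by apply: val_inj; rewrite /= /bump leqNgt ltn_ord. Qed.

Lemma row_eq0 n (v : 'rV[int]_(n.+1)) :
  v 0 ord_max = 0 -> (forall j, v 0 (cx j) = 0) -> v = 0.
Proof.
move=> vmax vcx; apply/rowP => i; rewrite mxE.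
by case: (unliftP ord_max i) => [j ->|->]; rewrite ?lift_max.
Qed.

Definition deg1 n (beta : 'I_n -> nat) : 'rV[int]_(n.+1) :=
  \row_i (if unlift ord_max i is Some j then (beta j)%:Z else 1).

Lemma deg1_cx n (beta : 'I_n -> nat) j : deg1 beta 0 (cx j) = (beta j)%:Z.
Proof. by rewrite mxE -lift_max liftK. Qed.

Lemma deg1_max n (beta : 'I_n -> nat) : deg1 beta 0 ord_max = 1.
Proof. by rewrite mxE unlift_none. Qed.

Lemma sigma_deg1 n (lam : 'I_n -> nat) (beta : 'I_n -> nat) :
  sigma lam (deg1 beta) = (\sum_i omega lam i * beta i)%N%:R - (Lcm lam)%:R.
Proof.
rewrite /sigma deg1_max mulr1 natr_sum; congr (_ - _).
by apply: eq_bigr => i _; rewrite deg1_cx natrM -[(beta i)%:Z]natz.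
Qed.

Section FacePoints.
Variables (n : nat) (lam : 'I_n -> nat) (R : realFieldType) (I : {set 'I_n}).

Definition face_pt (w : 'rV[int]_(n.+1)) : Prop :=
  S lam w /\ (forall i, i \in I -> F R lam (cx i) (embR R w)) /\ Fsigma R lam (embR R w).

Lemma face_pt_sigma w : face_pt w -> sigma lam w = 0.
Proof. by move=> [_ [_ [_]]]; rewrite /Hsigma sigma_embR => /eqP; rewrite intr_eq0 => /eqP. Qed.

Lemma face_pt_coord w i : face_pt w -> i \in I -> w 0 (cx i) = 0.
Proof. by move=> [_ [wI _]] /wI [_]; rewrite /H mxE => /eqP; rewrite intr_eq0 => /eqP. Qed.

Lemma grp_face_sigma v : grp face_pt v -> sigma lam v = 0.
Proof. by apply: grp_kernel; [exact: sigma_is_zmod_morphism|exact: face_pt_sigma]. Qed.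

Lemma grp_face_coord v i : i \in I -> grp face_pt v -> v 0 (cx i) = 0.
Proof. by move=> iI; apply: grp_kernel (coord_is_zmod_morphism _) _ => w /face_pt_coord; apply. Qed.

(* A degree-one vector on H_sigma whose exponent vanishes on I is a face
   point: it is itself a generator of S. *)
Lemma face_pt_deg1 (beta : 'I_n -> nat) :
  (\sum_i omega lam i * beta i)%N = Lcm lam -> (forall i, i \in I -> beta i = 0) ->
  face_pt (deg1 beta).
Proof.
move=> sum_beta betaI.
have sigma0 : sigma lam (deg1 beta) = 0 by rewrite sigma_deg1 sum_beta subrr.
have S_beta : S lam (deg1 beta).
  exists [:: deg1 beta]; split; last by rewrite big_seq1.
  move=> g; rewrite inE => /eqP ->; right; split; first by move=> j; rewrite deg1_cx.
  split; first exact: deg1_max.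
  by move: sigma0; rewrite /sigma deg1_max mulr1 => /eqP; rewrite subr_eq0 => /eqP ->.
have pos_beta : pos R lam (embR R (deg1 beta)).
  by exists [:: (1, deg1 beta)]; split; [move=> p; rewrite inE => /eqP ->|rewrite big_seq1 scale1r].
split=> //; split=> [i iI|]; split=> //.
- by rewrite /H mxE deg1_cx betaI.
- by rewrite /Hsigma sigma_embR sigma0.
Qed.

End FacePoints.

Definition cofactor (l m : nat) : nat := l %/ gcdn l m.

Lemma cofactor_dvd l m x : (0 < l)%N -> (l %| m * x)%N -> (cofactor l m %| x)%N.
Proof.
move=> l_gt0 l_mx; have g_gt0 : (0 < gcdn l m)%N by rewrite gcdn_gt0 l_gt0.
have el : l = (cofactor l m * gcdn l m)%N by rewrite divnK // dvdn_gcdl.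
have em : m = (m %/ gcdn l m * gcdn l m)%N by rewrite divnK // dvdn_gcdr.
have co : coprime (cofactor l m) (m %/ gcdn l m).
  by rewrite /coprime -(eqn_pmul2r g_gt0) mul1n muln_gcdl -el -em.
rewrite -(Gauss_dvdr x co) -(dvdn_pmul2r g_gt0) mulnAC -el -em //.
Qed.

Lemma minn_subl e x y : (minn (e - x) (e - y) = e - maxn x y)%N.
Proof.
case: (leqP x y) => h; first by apply/minn_idPr; rewrite leq_sub2l.
by apply/minn_idPl; rewrite leq_sub2l // ltnW.
Qed.

(* gcd(l / gcd(l,a), l / gcd(l,b)) = l / gcd(l, lcm(a,b)), compared prime by prime *)
Lemma cofactor_lcm l a b : (0 < l)%N -> (0 < a)%N -> (0 < b)%N ->
  gcdn (cofactor l a) (cofactor l b) = cofactor l (lcmn a b).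
Proof.
move=> l_gt0 a_gt0 b_gt0.
have cof_gt0 c : (0 < c)%N -> (0 < cofactor l c)%N.
  by move=> c_gt0; rewrite divn_gt0 ?gcdn_gt0 ?l_gt0 // dvdn_leq // dvdn_gcdl.
have ab_gt0 : (0 < lcmn a b)%N by rewrite lcmn_gt0 a_gt0 b_gt0.
apply: eqn_from_log; rewrite ?gcdn_gt0 ?cof_gt0 // => p.
rewrite logn_gcd ?cof_gt0 // !logn_div ?dvdn_gcdl // !logn_gcd // logn_lcm //.
by rewrite minn_maxr minn_subl.
Qed.

Section KoszulVectors.
Variables (n : nat) (lam : 'I_n -> nat).

Lemma sum_delta (f : 'I_n -> nat) j c : (\sum_i f i * ((i == j) * c) = f j * c)%N.
Proof.
rewrite (bigD1 j) //= eqxx mul1n big1 ?addn0 // => i /negbTE ->.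
by rewrite mul0n muln0.
Qed.

(* a_j = (lambda_j e_j, 1), the generator x_j^{lambda_j} t of the Rees algebra *)
Definition apex (j : 'I_n) : 'rV[int]_(n.+1) := deg1 (fun i => (i == j) * lam j)%N.

(* b_jk = ((lambda_j - c_j) e_j + c_k e_k, 1) with c_j = lambda_j / gcd(lambda_j, lambda_k),
   c_k = lambda_k / gcd(lambda_j, lambda_k); like a_j it lies on H_sigma *)
Definition mixed (j k : 'I_n) : 'rV[int]_(n.+1) :=
  deg1 (fun i => (i == j) * (lam j - cofactor (lam j) (lam k))
               + (i == k) * cofactor (lam k) (lam j))%N.

Definition koszul (j k : 'I_n) : 'rV[int]_(n.+1) := apex j - mixed j k.

Lemma koszul_cx j k i : koszul j k 0 (cx i) =
  ((i == j) * cofactor (lam j) (lam k))%N%:Z - ((i == k) * cofactor (lam k) (lam j))%N%:Z.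
Proof.
have c_le : (cofactor (lam j) (lam k) <= lam j)%N := leq_div _ _.
rewrite !mxE -lift_max !liftK.
by case: (i == j); case: (i == k) => /=; lia.
Qed.

Lemma koszul_max j k : koszul j k 0 ord_max = 0.
Proof. by rewrite !mxE !unlift_none subrr. Qed.

Variables (R : realFieldType) (I : {set 'I_n}).

Lemma face_pt_apex j : j \notin I -> face_pt lam R I (apex j).
Proof.
move=> jI; apply: face_pt_deg1; first by rewrite sum_delta omega_lam.
by move=> i iI; case: eqP => [eij|]; [move: jI; rewrite -eij iI|].
Qed.

Lemma grp_koszul j k : j \notin I -> k \notin I -> grp (face_pt lam R I) (koszul j k).
Proof.
move=> jI kI; apply: grpB; apply: grp_gen; first exact: face_pt_apex.
apply: face_pt_deg1.
  rewrite (eq_bigr _ (fun i _ => mulnDr _ _ _)) big_split /= !sum_delta mulnBr.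
  rewrite !omega_div ?dvdn_gcdl // omega_lam gcdnC.
  by rewrite subnK // leq_div.
move=> i iI; case: eqP => [eij|_]; first by move: jI; rewrite -eij iI.
by case: eqP => [eik|_]; first by move: kI; rewrite -eik iI.
Qed.

End KoszulVectors.

Section KoszulGcd.
Variables (n : nat) (lam : 'I_n -> nat).
Hypothesis lam_gt0 : forall i, (0 < lam i)%N.

Definition koszul_gcd (k : 'I_n) (T : seq 'I_n) : nat :=
  \big[gcdn/0%N]_(j <- T) cofactor (lam k) (lam j).

Definition lcm_seq (T : seq 'I_n) : nat := \big[lcmn/1%N]_(j <- T) lam j.

Lemma lcm_seq_gt0 T : (0 < lcm_seq T)%N.
Proof. by rewrite /lcm_seq; elim/big_ind: _ => // x y hx hy; rewrite lcmn_gt0 hx hy. Qed.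

Lemma lam_dvd_lcm_seq T j : j \in T -> (lam j %| lcm_seq T)%N.
Proof.
rewrite /lcm_seq; elim: T => [|a T IH] //; rewrite inE big_cons => /orP [/eqP ->|/IH h].
  exact: dvdn_lcml.
exact: dvdn_trans h (dvdn_lcmr _ _).
Qed.

Lemma koszul_gcd_cofactor k a T :
  koszul_gcd k (a :: T) = cofactor (lam k) (lcm_seq (a :: T)).
Proof.
elim: T a => [|b T IH] a; first by rewrite /koszul_gcd /lcm_seq !big_seq1.
have -> : koszul_gcd k [:: a, b & T] = gcdn (cofactor (lam k) (lam a)) (koszul_gcd k (b :: T)).
  by rewrite /koszul_gcd big_cons.
have -> : lcm_seq [:: a, b & T] = lcmn (lam a) (lcm_seq (b :: T)) by rewrite /lcm_seq big_cons.
by rewrite IH cofactor_lcm ?lcm_seq_gt0.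
Qed.

(* If omega_k x + sum_{j in T} omega_j y_j = 0 then koszul_gcd k T divides x:
   multiplying by lambda_k * lcm(lambda_T) / L shows lambda_k | lcm(lambda_T) * x. *)
Lemma relation_dvd k (T : seq 'I_n) (x : int) (y : 'I_n -> int) :
  (omega lam k)%:R * x + \sum_(j <- T) (omega lam j)%:R * y j = 0 ->
  (koszul_gcd k T %| `|x|)%N.
Proof.
case: T => [|a T] rel.
  move: rel; rewrite big_nil addr0 => /eqP; rewrite mulf_eq0 pnatr_eq0.
  by rewrite eqn0Ngt omega_gt0 //= => /eqP ->.
set l := lam k; set M := lcm_seq (a :: T).
rewrite koszul_gcd_cofactor; apply: cofactor_dvd => //.
have scaled : (Lcm lam)%:R * (M%:R * x + l%:R * \sum_(j <- a :: T) (M %/ lam j)%:R * y j)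
   = ((omega lam k)%:R * x + \sum_(j <- a :: T) (omega lam j)%:R * y j) * (l * M)%:R.
  rewrite mulrDr mulrDl; congr (_ + _).
    by rewrite mulrA [RHS]mulrAC -!natrM mulnA omega_lam.
  rewrite !mulr_sumr mulr_suml !big_seq; apply: eq_bigr => j hj.
  have e : (Lcm lam * l * (M %/ lam j) = omega lam j * (l * M))%N.
    rewrite -(omega_lam lam j) -!mulnA; congr (_ * _)%N.
    by rewrite mulnCA [(lam j * _)%N]mulnC divnK ?lam_dvd_lcm_seq.
  by rewrite !mulrA -!natrM e [RHS]mulrAC -natrM.
move: scaled; rewrite rel mul0r => /eqP; rewrite mulf_eq0 pnatr_eq0 eqn0Ngt Lcm_gt0 //=.
rewrite addr_eq0 => /eqP hM.
have : (l%:Z %| M%:Z * x)%Z.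
  apply/dvdzP; exists (- \sum_(j <- a :: T) (M %/ lam j)%:R * y j).
  by rewrite -!natz hM mulNr mulrC.
by rewrite dvdzE abszM.
Qed.

End KoszulGcd.

Section ReverseInclusion.
Variables (n : nat) (lam : 'I_n -> nat) (R : realFieldType) (I : {set 'I_n}).
Hypothesis lam_gt0 : forall i, (0 < lam i)%N.

Local Notation face := (face_pt lam R I).

Lemma koszul_lift k (T : seq 'I_n) :
  k \notin T -> k \notin I -> (forall j, j \in T -> j \notin I) ->
  forall x : int, (koszul_gcd lam k T %| `|x|)%N ->
  exists w, [/\ grp face w, w 0 (cx k) = x,
                forall i, i \notin k :: T -> w 0 (cx i) = 0 & w 0 ord_max = 0].
Proof.
elim: T => [|a T IH] kT kI TI x dvd_x.
  move: dvd_x; rewrite /koszul_gcd big_nil dvd0n absz_eq0 => /eqP ->.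
  by exists 0; split; [exact: grp0|rewrite mxE|move=> i _; rewrite mxE|rewrite mxE].
move: kT; rewrite inE negb_or => /andP [ka kT].
have aI : a \notin I by apply: TI; rewrite inE eqxx.
have TI' j : j \in T -> j \notin I by move=> jT; apply: TI; rewrite inE jT orbT.
set c := cofactor (lam k) (lam a); set D := koszul_gcd lam k T.
have [u [v bezout]] := Bezoutz c%:Z D%:Z.
have gcd_cons : koszul_gcd lam k (a :: T) = gcdn c D by rewrite /koszul_gcd big_cons.
have /dvdzP [q ->] : (gcdz c%:Z D%:Z %| x)%Z by rewrite dvdzE /= -gcd_cons.
have dvd_qvD : (D %| `|(q * v * D%:Z)%R|)%N by rewrite abszM dvdn_mull.
have [w [w_grp w_k w_supp w_max]] := IH kT kI TI' _ dvd_qvD.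
exists (w - koszul lam a k *~ (q * u)); split.
- by apply/grpB/grpMz/grp_koszul.
- rewrite coordB coordMz koszul_cx eqxx (negbTE ka) w_k /= -bezout; lia.
- move=> i; rewrite !inE !negb_or => /and3P [ik ia iT].
  rewrite coordB coordMz koszul_cx (negbTE ia) (negbTE ik) w_supp ?inE ?negb_or ?ik //=; lia.
- by rewrite coordB coordMz koszul_max w_max mul0r subrr.
Qed.

(* Every vector supported on T (disjoint from I), of degree 0 and on H_sigma,
   is a combination of face points: clear one coordinate at a time. *)
Lemma kernel_grp_face (T : seq 'I_n) : uniq T -> (forall j, j \in T -> j \notin I) ->
  forall v : 'rV[int]_(n.+1), (forall i, i \notin T -> v 0 (cx i) = 0) ->
  v 0 ord_max = 0 -> sigma lam v = 0 -> grp face v.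
Proof.
elim: T => [|k T IH] T_uniq TI v v_supp v_max v_sigma.
  by rewrite (row_eq0 v_max (fun i => v_supp i isT)); exact: grp0.
move: T_uniq => /= /andP [kT T_uniq].
have kI : k \notin I by apply: TI; rewrite inE eqxx.
have TI' j : j \in T -> j \notin I by move=> jT; apply: TI; rewrite inE jT orbT.
have rel : (omega lam k)%:R * v 0 (cx k) + \sum_(j <- T) (omega lam j)%:R * v 0 (cx j) = 0.
  move: v_sigma; rewrite /sigma v_max mulr0 subr0 (bigID (mem (k :: T))) /=.
  rewrite [X in _ + X]big1 => [|i /v_supp ->]; last by rewrite mulr0.
  by rewrite addr0 -big_uniq //= ?kT // big_cons.
have [w [w_grp w_k w_supp w_max]] := koszul_lift kT kI TI' (relation_dvd lam_gt0 rel).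
rewrite -(subrK w v); apply: grpD => //; apply: IH => //.
- move=> i iT; rewrite coordB; have [->|ik] := eqVneq i k; first by rewrite w_k subrr.
  by rewrite v_supp ?w_supp ?subrr // inE negb_or ?ik.
- by rewrite coordB v_max w_max subrr.
- by rewrite sigmaB v_sigma (grp_face_sigma w_grp) subrr.
Qed.

(* The reverse inclusion: first clear the last coordinate using some apex
   a_j with j outside I (if there is none, sigma forces that coordinate to 0). *)
Lemma grp_face_of_hyperplanes (v : 'rV[int]_(n.+1)) :
  (forall i, i \in I -> v 0 (cx i) = 0) -> sigma lam v = 0 -> grp face v.
Proof.
move=> vI v_sigma; set T := [seq j <- enum 'I_n | j \notin I].
have T_uniq : uniq T by rewrite filter_uniq // enum_uniq.
have TI j : j \in T -> j \notin I by rewrite mem_filter => /andP [].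
have T_supp (u : 'rV[int]_(n.+1)) i :
  (forall i, i \in I -> u 0 (cx i) = 0) -> i \notin T -> u 0 (cx i) = 0.
  by move=> uI; rewrite mem_filter mem_enum andbT negbK; apply: uI.
case: (pickP (fun j => j \notin I)) => [j jI|all_I]; last first.
  have v_max : v 0 ord_max = 0.
    move: v_sigma; rewrite /sigma big1 => [|i _]; last by rewrite vI ?mulr0 ?(negbFE (all_I i)).
    by move/eqP; rewrite sub0r oppr_eq0 mulf_eq0 pnatr_eq0 eqn0Ngt Lcm_gt0 //= => /eqP.
  by rewrite (row_eq0 v_max (fun i => vI i (negbFE (all_I i)))); exact: grp0.
set t := v 0 ord_max; rewrite -(subrK (apex lam j *~ t) v).
apply: grpD; last exact/grpMz/grp_gen/face_pt_apex.
apply: (kernel_grp_face T_uniq TI).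
- move=> i; apply: T_supp => {}i iI; rewrite coordB coordMz deg1_cx vI //.
  by case: eqP => [eij|_]; [move: jI; rewrite -eij iI|rewrite mul0r subrr].
- by rewrite coordB coordMz deg1_max mul1r subrr.
- by rewrite sigmaB sigmaMz (face_pt_sigma (face_pt_apex lam R jI)) v_sigma mul0rz subrr.
Qed.

End ReverseInclusion.

Theorem mainTheorem12 (n : nat) (lam : 'I_n -> nat) (hlam : forall i, (0 < lam i)%N)
  (R : realFieldType) (I : {set 'I_n}) (hI : I != set0) :
  forall v : 'rV[int]_(n.+1),
    grp (fun w => S lam w /\ (forall i, i \in I -> F R lam (cx i) (embR R w))
                          /\ Fsigma R lam (embR R w)) v
    <-> (grp (S lam) v /\ (forall i, i \in I -> H (cx i) v) /\ Hsigma lam v).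
Proof.
move=> v; rewrite -/(grp (face_pt lam R I) v); split=> [v_grp|[_ [vI v_sigma]]].
  split; first by apply: grp_sub v_grp => w [].
  split; last exact: grp_face_sigma v_grp.
  by move=> i iI; exact: grp_face_coord iI v_grp.
exact: grp_face_of_hyperplanes.
Qed.
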